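(* Let $q\ge1$ and $t\ge 1$ be integers. If a code $\mathcal{C}\subseteq\mathcal{S}_{\mathrm{all}}^q$ is a $t$-tail-deletion-correcting code, then it is a $t$-tail-insertion-correcting code. However, the converse does not hold in general: there exist integers $q$ and $t\ge1$ and a code $\mathcal{C}\subseteq\mathcal{S}_{\mathrm{all}}^q$ that is $t$-tail-insertion-correcting but not $t$-tail-deletion-correcting.
   Context: Let $[q]=\{0,1,\dots,q-1\}$. For $1\le m\le q$, a partial permutation of length $m$ over $[q]$ is a sequence $\pi=(\pi_1,\dots,\pi_m)$ of $m$ pairwise distinct elements of $[q]$. Let $\mathcal{S}_m^q$ be the set of those of length $m$ and $\mathcal{S}_{\mathrm{all}}^q=\bigcup_{m=1}^{q}\mathcal{S}_m^q$. A code is any subset of $\mathcal{S}_{\mathrm{all}}^q$. Juxtaposition $\omega\pi$ denotes concatenation with $\omega$ on the left. Tail deletions: for $\pi$ of length $m$ and integer $j\ge 0$, $\pi_{\downarrow j}=(\pi_{k+1},\dots,\pi_m)$ with $k=\min(j,m-1)$ (leftmost symbols are deleted; the last symbol is never deleted); $\mathcal{B}_{\mathrm{del}}^t(\pi)=\{\pi_{\downarrow j}:0\le j\le t\}$. Tail insertions: $\mathcal{B}_{\mathrm{ins}}^t(\pi)$ is the set of all $\omega\pi\in\mathcal{S}_{\mathrm{all}}^q$ with $\omega$ a (possibly empty) sequence of at most $t$ elements of $[q]$. For $X\in\{\mathrm{del},\mathrm{ins}\}$, a code $\mathcal{C}$ is $t$-tail-$X$-correcting if $\mathcal{B}_X^t(\pi_1)\cap\mathcal{B}_X^t(\pi_2)=\emptyset$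 for all distinct $\pi_1,\pi_2\in\mathcal{C}$. *)

From mathcomp Require Import all_boot.
Set Implicit Arguments. Unset Strict Implicit. Unset Printing Implicit Defensive.

(* A partial permutation over [q] = {0,..,q-1}: a nonempty sequence of
   pairwise distinct elements of [q] (length automatically <= q). *)
Definition is_pperm (q : nat) (p : seq nat) : Prop :=
  [/\ 0 < size p, uniq p & all (fun x => x < q) p].

Definition is_code (q : nat) (C : seq nat -> Prop) : Prop :=
  forall p, C p -> is_pperm q p.

Definition tail_del (p : seq nat) (j : nat) : seq nat :=
  drop (minn j (size p).-1) p.

Definition ball_del (t : nat) (p : seq nat) (s : seq nat) : Prop :=
  exists j, j <= t /\ s = tail_del p j.

Definition ball_ins (q t : nat) (p : seq nat) (s : seq nat) : Prop :=
  exists w : seq nat, [/\ size w <= t, all (fun x => x < q) w,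
                          s = w ++ p & is_pperm q s].

Definition disjoint_balls (B : seq nat -> seq nat -> Prop) (C : seq nat -> Prop) : Prop :=
  forall p1 p2, C p1 -> C p2 -> p1 <> p2 -> forall s, ~ (B p1 s /\ B p2 s).

Definition tail_del_correcting (t : nat) (C : seq nat -> Prop) : Prop :=
  disjoint_balls (ball_del t) C.

Definition tail_ins_correcting (q t : nat) (C : seq nat -> Prop) : Prop :=
  disjoint_balls (ball_ins q t) C.

From mathcomp Require Import all_boot.
From mathcomp Require Import zify.
Set Implicit Arguments. Unset Strict Implicit. Unset Printing Implicit Defensive.

(* If the insertion balls of p1 and p2 meet, then w1 ++ p1 = w2 ++ p2, so the
   shorter word is the longer one with at most t leading symbols removed; it
   therefore lies in both deletion balls.  Insertion balls of words of equal
   length never meet, whereas the deletion balls of 01 and 21 share 1. *)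

Lemma cat_eq_drop (T : Type) (w1 w2 p1 p2 : seq T) :
  w1 ++ p1 = w2 ++ p2 -> size w1 <= size w2 ->
  p2 = drop (size w2 - size w1) p1.
Proof.
move=> /(congr1 (drop (size w2))) + le12.
by rewrite drop_cat ltnNge le12 /= drop_cat ltnn subnn drop0 => ->.
Qed.

Lemma ball_del_refl (t : nat) (p : seq nat) : ball_del t p p.
Proof. by exists 0; rewrite /tail_del min0n drop0. Qed.

Lemma ball_del_drop (t j : nat) (p : seq nat) :
  j <= t -> 0 < size (drop j p) -> ball_del t p (drop j p).
Proof.
move=> le_jt; rewrite size_drop => lt_jp.
by exists j; split=> //; rewrite /tail_del (minn_idPl _) //; lia.
Qed.

Lemma ball_ins_suffix (q t : nat) (p1 p2 s : seq nat) :
  ball_ins q t p1 s -> ball_ins q t p2 s -> size p1 <= size p2 ->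
  exists2 j, j <= t & p1 = drop j p2.
Proof.
move=> [w1 [le_w1t _ -> _]] [w2 [_ _ E _]] le12.
have le_w21 : size w2 <= size w1.
  by move: (congr1 size E); rewrite !size_cat; lia.
exists (size w1 - size w2); first by lia.
exact: cat_eq_drop.
Qed.

Lemma ball_ins_same_size (q t : nat) (p1 p2 s : seq nat) :
  ball_ins q t p1 s -> ball_ins q t p2 s -> size p1 = size p2 -> p1 = p2.
Proof.
move=> B1 B2 eq12; have [j _ def_p1] := ball_ins_suffix B1 B2 (eq_leq eq12).
have [j0 | /size0nil p2_nil] : j = 0 \/ size p2 = 0.
  by move: eq12; rewrite def_p1 size_drop; lia.
  by rewrite def_p1 j0 drop0.
by rewrite def_p1 p2_nil.
Qed.

Lemma tail_del_correcting_ins (q t : nat) (C : seq nat -> Prop) :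
  is_code q C -> tail_del_correcting t C -> tail_ins_correcting q t C.
Proof.
move=> codeC delC p1 p2 C1 C2 ne12 s [B1 B2].
wlog le12 : p1 p2 C1 C2 ne12 B1 B2 / size p1 <= size p2.
  move=> wlog_le; have [|/ltnW] := leqP (size p1) (size p2); first exact: wlog_le.
  by apply: wlog_le => //; apply: nesym.
have [j le_jt def_p1] := ball_ins_suffix B1 B2 le12.
have [p1_gt0 _ _] := codeC _ C1.
apply: (delC p1 p2 C1 C2 ne12 p1); split; first exact: ball_del_refl.
by rewrite def_p1 in p1_gt0 *; apply: ball_del_drop.
Qed.

Lemma const_size_tail_ins_correcting (q t n : nat) (C : seq nat -> Prop) :
  (forall p, C p -> size p = n) -> tail_ins_correcting q t C.
Proof.
move=> sizeC p1 p2 C1 C2 ne12 s [B1 B2]; apply: ne12.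
by apply: ball_ins_same_size B1 B2 _; rewrite !sizeC.
Qed.

Theorem mainTheorem4 :
  (forall (q t : nat) (C : seq nat -> Prop), 1 <= q -> 1 <= t ->
     is_code q C -> tail_del_correcting t C -> tail_ins_correcting q t C)
  /\
  (exists (q t : nat) (C : seq nat -> Prop), [/\ 1 <= q, 1 <= t, is_code q C,
     tail_ins_correcting q t C & ~ tail_del_correcting t C]).
Proof.
split=> [q t C _ _|]; first exact: tail_del_correcting_ins.
pose C p := p \in [:: [:: 0; 1]; [:: 2; 1]].
exists 3, 1, C; split=> //.
- by move=> p; rewrite /C !inE => /orP[]/eqP->.
- by apply: (@const_size_tail_ins_correcting _ _ 2) => p; rewrite /C !inE => /orP[]/eqP->.
- move=> delC; apply: (delC [:: 0; 1] [:: 2; 1] _ _ _ [:: 1]) => //.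
  by split; exists 1.
Qed.
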